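(* For all processes $s,t$ of a PTS over $A_\tau$, $s$ and $t$ are weak probabilistic trace equivalent if and only if $\mathcal{L}^{\mathrm{w}}(s)\equiv^\dagger\mathcal{L}^{\mathrm{w}}(t)$, i.e. every formula in $\mathcal{L}^{\mathrm{w}}(s)$ is $\equiv^\dagger$-related to some formula in $\mathcal{L}^{\mathrm{w}}(t)$ and vice versa.
   Context: PTS $(\mathcal{S},A_\tau,\to)$ with $A_\tau=A\cup\{\tau\}$, $\tau$ the silent action, finitely supported distributions; processes image-finite and finite. Computations $c=s_0\xrightarrow{a_1}\cdots\xrightarrow{a_n}s_n$ via transitions $s_{i-1}\xrightarrow{a_i}\pi_i$, $s_i\in\mathrm{supp}(\pi_i)$; $\Pr(c)=\prod\pi_i(s_i)$ (empty: 1); $|c|=n$; $\mathrm{tr}(c)=a_1\cdots a_n$; maximal = not a proper prefix of another computation from the same process; $\mathcal{C}_{\max}(z)$; $\Pr$ of a set is the sum. A resolution of $s$ is a PTS $\mathcal{Z}=(Z,A_\tau,\to_{\mathcal{Z}})$ with $\mathrm{corr}\colon Z\to\mathcal{S}$ and initial state $z_s$, $\mathrm{corr}(z_s)=s$, such that $z_s$ is in no target support, every other state is in the support of a target of a transition from a different state, every $z\xrightarrow{a}_{\mathcal{Z}}\pi$ is matched by $\mathrm{corr}(z)\xrightarrow{a}\pi'$ with $\pi(z')=\pi'(\mathrm{corr}(z'))$, and each state has at most one outgoing transition; $\mathrm{res}(s)$ the set of resolutions. Traces $\alpha\equiv\beta$ iff they coincide after deleting all $\tau$'s. For $\alpha\in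 A^\star$, $\mathcal{C}^{\mathrm{w}}(z,\alpha)$ is the set of computations $c$ from $z$ with $\mathrm{tr}(c)\equiv\alpha$ that are not proper prefixes of another computation $c'$ from $z$ with $\mathrm{tr}(c')\equiv\alpha$. $s,t$ are weak probabilistic trace equivalent iff for every $\mathcal{Z}_s\in\mathrm{res}(s)$ there is $\mathcal{Z}_t\in\mathrm{res}(t)$ with $\Pr(\mathcal{C}^{\mathrm{w}}(z_s,\alpha))=\Pr(\mathcal{C}^{\mathrm{w}}(z_t,\alpha))$ for all $\alpha\in A^\star$, and symmetrically. Logic $\mathcal{L}^{\mathrm{w}}$: trace formulae $\Phi::=\top\mid\langle a\rangle\Phi$ with $a\in A_\tau$, $\mathrm{depth}(\top)=0$, $\mathrm{depth}(\langle a\rangle\Phi)=1+\mathrm{depth}(\Phi)$; trace distribution formulae $\bigoplus_{i\in I}r_i\Phi_i$ ($I$ finite nonempty, $\Phi_i$ pairwise distinct, $r_i\in(0,1]$, $\sum r_i=1$), viewed as distributions on trace formulae. $c\models\top$ always; $c\models\langle a\rangle\Phi$ iff $c=s\xrightarrow{a}c'$ with $c'\models\Phi$. $s\models\bigoplus_i r_i\Phi_i$ iff some $\mathcal{Z}\in\mathrm{res}(s)$ with initial state $z$ satisfies $\Pr(\{c\in\mathcal{C}_{\max}(z):c\models\Phi_i,|c|=\mathrm{depth}(\Phi_i)\})=r_i$ for all $i$. $\mathcal{L}^{\mathrm{w}}(s)$ is the set of trace distribution formulae satisfied by $s$. Every trace formula is $\Phi_\alpha$ for a unique $\alpha\in A_\tau^\star$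 ($\Phi_\varepsilon=\top$, $\Phi_{a\alpha}=\langle a\rangle\Phi_\alpha$); $\Phi_\alpha\equiv\Phi_\beta$ iff $\alpha\equiv\beta$; $\Psi_1\equiv^\dagger\Psi_2$ iff $\Psi_1,\Psi_2$ assign the same total probability to every $\equiv$-class of trace formulae. *)

From Stdlib Require Import Reals List.
Import ListNotations.
Open Scope R_scope.
Set Implicit Arguments.

(* A PTS over A_tau = option A  (None = tau) with state type X is given by a
   transition relation  X -> option A -> (X -> R) -> Prop  whose targets are
   finitely supported probability distributions. *)

Definition sumR (l : list R) : R := fold_right Rplus 0 l.

Definition is_dist (X : Type) (pi : X -> R) : Prop :=
  exists l : list X, NoDup l /\ (forall x, pi x <> 0 -> In x l) /\
    (forall x, 0 <= pi x) /\ sumR (map pi l) = 1.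

Definition is_pts (A X : Type) (T : X -> option A -> (X -> R) -> Prop) : Prop :=
  forall x a pi, T x a pi -> is_dist pi.

(* a step of a computation: the action, the target distribution of the
   transition used, and the state reached (in the support of the target) *)
Definition step (A X : Type) : Type := (option A * (X -> R) * X)%type.

Fixpoint is_comp (A X : Type) (T : X -> option A -> (X -> R) -> Prop)
    (x : X) (l : list (step A X)) : Prop :=
  match l with
  | [] => True
  | (a, pi, y) :: l' => T x a pi /\ 0 < pi y /\ is_comp T y l'
  end.

Definition comp_prob (A X : Type) (l : list (step A X)) : R :=
  fold_right (fun st p => let '(_, pi, y) := st in pi y * p) 1 l.

Definition comp_trace (A X : Type) (l : list (step A X)) : list (option A) :=
  map (fun st => fst (fst st)) l.

Definition proper_prefix (B : Type) (c c' : list B) : Prop :=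
  exists d, d <> [] /\ c' = c ++ d.

Definition is_max_comp (A X : Type) (T : X -> option A -> (X -> R) -> Prop)
    (x : X) (c : list (step A X)) : Prop :=
  is_comp T x c /\ ~ (exists c', is_comp T x c' /\ proper_prefix c c').

Definition set_prob (A X : Type) (P : list (step A X) -> Prop) (r : R) : Prop :=
  exists L : list (list (step A X)),
    NoDup L /\ (forall c, P c <-> In c L) /\ sumR (map (@comp_prob A X) L) = r.

Inductive reach (A S : Type) (T : S -> option A -> (S -> R) -> Prop) (s : S) : S -> Prop :=
| reach_refl : reach T s s
| reach_step : forall x a pi y, reach T s x -> T x a pi -> 0 < pi y -> reach T s y.

Definition succ (A S : Type) (T : S -> option A -> (S -> R) -> Prop) (y x : S) : Prop :=
  exists a pi, T x a pi /\ 0 < pi y.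

Definition image_finite (A S : Type) (T : S -> option A -> (S -> R) -> Prop) (s : S) : Prop :=
  forall x, reach T s x -> exists L : list (option A * (S -> R)),
    forall a pi, T x a pi -> In (a, pi) L.

(* finite: there is no infinite computation from s *)
Definition finite_proc (A S : Type) (T : S -> option A -> (S -> R) -> Prop) (s : S) : Prop :=
  Acc (succ T) s.

Definition is_resolution (A S : Type) (T : S -> option A -> (S -> R) -> Prop) (s : S)
    (Z : Type) (TZ : Z -> option A -> (Z -> R) -> Prop) (corr : Z -> S) (z0 : Z) : Prop :=
  is_pts TZ /\
  corr z0 = s /\
  (forall z a pi, TZ z a pi -> ~ (0 < pi z0)) /\
  (forall z, z <> z0 -> exists z' a pi, z' <> z /\ TZ z' a pi /\ 0 < pi z) /\
  (forall z a pi, TZ z a pi ->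
     exists pi', T (corr z) a pi' /\ forall z', pi z' = pi' (corr z')) /\
  (forall z a1 pi1 a2 pi2, TZ z a1 pi1 -> TZ z a2 pi2 -> a1 = a2 /\ pi1 = pi2).

Fixpoint vis (A : Type) (l : list (option A)) : list A :=
  match l with
  | [] => []
  | None :: l' => vis l'
  | Some a :: l' => a :: vis l'
  end.

Definition Cw (A Z : Type) (TZ : Z -> option A -> (Z -> R) -> Prop) (z : Z)
    (alpha : list A) (c : list (step A Z)) : Prop :=
  is_comp TZ z c /\ vis (comp_trace c) = alpha /\
  ~ (exists c', is_comp TZ z c' /\ vis (comp_trace c') = alpha /\ proper_prefix c c').

Definition wpte_half (A S : Type) (T : S -> option A -> (S -> R) -> Prop) (s t : S) : Prop :=
  forall (Z1 : Type) (T1 : Z1 -> option A -> (Z1 -> R) -> Prop) (corr1 : Z1 -> S) (z1 : Z1),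
    is_resolution T s T1 corr1 z1 ->
    exists (Z2 : Type) (T2 : Z2 -> option A -> (Z2 -> R) -> Prop) (corr2 : Z2 -> S) (z2 : Z2),
      is_resolution T t T2 corr2 z2 /\
      forall alpha : list A, exists r : R,
        set_prob (Cw T1 z1 alpha) r /\ set_prob (Cw T2 z2 alpha) r.

Definition weak_prob_trace_equiv (A S : Type) (T : S -> option A -> (S -> R) -> Prop) (s t : S) : Prop :=
  wpte_half T s t /\ wpte_half T t s.

Inductive tform (A : Type) : Type :=
| TTop : tform A
| TDia : option A -> tform A -> tform A.
Arguments TTop {A}.

Fixpoint depth (A : Type) (f : tform A) : nat :=
  match f with TTop => 0%nat | TDia _ f' => S (depth f') end.

Fixpoint csat (A X : Type) (c : list (step A X)) (f : tform A) : Prop :=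
  match f with
  | TTop => True
  | TDia a f' => match c with
                 | [] => False
                 | (a', _, _) :: c' => a' = a /\ csat c' f'
                 end
  end.

(* trace distribution formula  (+)_{i in I} r_i Phi_i  as a list of pairs *)
Definition tdform (A : Type) : Type := list (tform A * R).

Definition is_tdform (A : Type) (psi : tdform A) : Prop :=
  psi <> [] /\ NoDup (map fst psi) /\
  (forall f r, In (f, r) psi -> 0 < r <= 1) /\ sumR (map snd psi) = 1.

Definition tdsat (A S : Type) (T : S -> option A -> (S -> R) -> Prop) (s : S)
    (psi : tdform A) : Prop :=
  exists (Z : Type) (TZ : Z -> option A -> (Z -> R) -> Prop) (corr : Z -> S) (z : Z),
    is_resolution T s TZ corr z /\
    forall f r, In (f, r) psi ->
      set_prob (fun c => is_max_comp TZ z c /\ csat c f /\ length c = depth f) r.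

Fixpoint ftrace (A : Type) (f : tform A) : list (option A) :=
  match f with TTop => [] | TDia a f' => a :: ftrace f' end.

Definition tform_equiv (A : Type) (f g : tform A) : Prop :=
  vis (ftrace f) = vis (ftrace g).

Inductive class_mass (A : Type) : tform A -> tdform A -> R -> Prop :=
| cm_nil : forall f, class_mass f [] 0
| cm_in : forall f g r psi m, tform_equiv g f -> class_mass f psi m ->
            class_mass f ((g, r) :: psi) (r + m)
| cm_out : forall f g r psi m, ~ tform_equiv g f -> class_mass f psi m ->
            class_mass f ((g, r) :: psi) m.

Definition tdf_equiv (A : Type) (psi1 psi2 : tdform A) : Prop :=
  forall f m, class_mass f psi1 m <-> class_mass f psi2 m.

Definition Lw_half (A S : Type) (T : S -> option A -> (S -> R) -> Prop) (s t : S) : Prop :=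
  forall psi, is_tdform psi -> tdsat T s psi ->
    exists psi', is_tdform psi' /\ tdsat T t psi' /\ tdf_equiv psi psi'.

Definition Lw_equiv (A S : Type) (T : S -> option A -> (S -> R) -> Prop) (s t : S) : Prop :=
  Lw_half T s t /\ Lw_half T t s.

(* In a resolution of a finite process the maximal computations form a finite set of
   probability 1.  A computation in [Cw z alpha] is a prefix of a maximal computation at
   which the visible trace [alpha] is complete and the next step (if any) is visible, so
   Pr(Cw z alpha) is the probability that the visible trace of a maximal computation
   extends [alpha].  By inclusion-exclusion over one-letter extensions, these prefix
   probabilities and the distribution of visible traces of maximal computations determine
   each other.  On the logical side, a formula satisfied through a resolution must list
   exactly the distribution of full traces of its maximal computations, so its class masses
   form the distribution of visible traces; and every resolution satisfies that formula.
   Hence both equivalences say that every resolution of one process is matched by one of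
   the other with the same distribution of visible traces. *)

From Stdlib Require Import Reals List Lra Lia Classical ClassicalEpsilon Permutation.
Import ListNotations.
Open Scope R_scope.
Set Implicit Arguments.

Notation emi := excluded_middle_informative.

Definition prefix (B : Type) (u v : list B) : Prop := exists d, v = u ++ d.

Section WeightedSums.

Variable X : Type.
Implicit Types (L : list X) (p : X -> R) (Q : X -> Prop).

Lemma sumR_app (l1 l2 : list R) : sumR (l1 ++ l2) = sumR l1 + sumR l2.
Proof. induction l1 as [|r l1 IH]; simpl; [lra | rewrite IH; lra]. Qed.

Lemma sumR_perm (l1 l2 : list R) : Permutation l1 l2 -> sumR l1 = sumR l2.
Proof. induction 1; simpl; lra. Qed.

Lemma sumR_map_ext L (f g : X -> R) :
  (forall x, In x L -> f x = g x) -> sumR (map f L) = sumR (map g L).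
Proof.
  induction L as [|x L IH]; simpl; intros H; [reflexivity|].
  rewrite H, IH; auto.
Qed.

Lemma sumR_map_scal L k (f : X -> R) :
  sumR (map (fun x => k * f x) L) = k * sumR (map f L).
Proof. induction L as [|x L IH]; simpl; [ring | rewrite IH; ring]. Qed.

Lemma sumR_map_nonneg L (f : X -> R) :
  (forall x, In x L -> 0 <= f x) -> 0 <= sumR (map f L).
Proof.
  induction L as [|x L IH]; simpl; intros H; [lra|].
  pose proof (H x (or_introl eq_refl)); pose proof (IH (fun y Hy => H y (or_intror Hy))).
  lra.
Qed.

Definition mass L p Q : R := sumR (map (fun x => if emi (Q x) then p x else 0) L).

Lemma mass_ext L p Q1 Q2 :
  (forall x, In x L -> (Q1 x <-> Q2 x)) -> mass L p Q1 = mass L p Q2.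
Proof.
  intros H; apply sumR_map_ext; intros x Hx.
  destruct (emi (Q1 x)), (emi (Q2 x)); firstorder.
Qed.

Lemma mass_none L p Q : (forall x, In x L -> ~ Q x) -> mass L p Q = 0.
Proof.
  unfold mass; induction L as [|x L IH]; simpl; intros H; [reflexivity|].
  destruct (emi (Q x)) as [Hq|_]; [exfalso; exact (H x (or_introl eq_refl) Hq)|].
  rewrite IH; [lra | auto].
Qed.

Lemma mass_all L p Q : (forall x, In x L -> Q x) -> mass L p Q = sumR (map p L).
Proof.
  unfold mass; induction L as [|x L IH]; simpl; intros H; [reflexivity|].
  destruct (emi (Q x)) as [_|Hq]; [|exfalso; exact (Hq (H x (or_introl eq_refl)))].
  rewrite IH; auto.
Qed.

Lemma mass_or L p Q1 Q2 :
  (forall x, In x L -> ~ (Q1 x /\ Q2 x)) ->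
  mass L p (fun x => Q1 x \/ Q2 x) = mass L p Q1 + mass L p Q2.
Proof.
  unfold mass; induction L as [|x L IH]; simpl; intros H; [lra|].
  rewrite IH by auto.
  destruct (emi (Q1 x \/ Q2 x)), (emi (Q1 x)), (emi (Q2 x)); try lra; firstorder.
Qed.

Lemma mass_le_sum L p Q :
  (forall x, In x L -> 0 <= p x) -> mass L p Q <= sumR (map p L).
Proof.
  unfold mass; induction L as [|x L IH]; simpl; intros H; [lra|].
  pose proof (IH (fun y Hy => H y (or_intror Hy))); pose proof (H x (or_introl eq_refl)).
  destruct (emi (Q x)); lra.
Qed.

Lemma mass_pos L p Q x :
  (forall y, In y L -> 0 <= p y) -> In x L -> Q x -> 0 < p x -> 0 < mass L p Q.
Proof.
  unfold mass; induction L as [|y L IH]; simpl; intros H Hx Hq Hp; [destruct Hx|].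
  pose proof (H y (or_introl eq_refl)).
  assert (0 <= sumR (map (fun x => if emi (Q x) then p x else 0) L)).
  { apply sumR_map_nonneg; intros z Hz; destruct (emi (Q z)); [apply H; auto | lra]. }
  destruct Hx as [<- | Hx].
  - destruct (emi (Q y)); [lra | contradiction].
  - pose proof (IH (fun z Hz => H z (or_intror Hz)) Hx Hq Hp).
    destruct (emi (Q y)); lra.
Qed.

Lemma mass_eq_sum_all L p Q :
  (forall x, In x L -> 0 < p x) -> mass L p Q = sumR (map p L) ->
  forall x, In x L -> Q x.
Proof.
  induction L as [|y L IH]; simpl; intros H E x Hx; [destruct Hx|].
  assert (mass L p Q <= sumR (map p L))
    by (apply mass_le_sum; intros z Hz; apply Rlt_le, H; auto).
  pose proof (H y (or_introl eq_refl)).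
  unfold mass in *; simpl in E.
  destruct (emi (Q y)); [|lra].
  destruct Hx as [<- | Hx]; [assumption|].
  apply IH; auto; lra.
Qed.

Lemma mass_bigcup {Y : Type} (G : list Y) L p (E : Y -> X -> Prop) :
  NoDup G -> (forall g1 g2 x, In g1 G -> In g2 G -> E g1 x -> E g2 x -> g1 = g2) ->
  sumR (map (fun g => mass L p (E g)) G) = mass L p (fun x => exists g, In g G /\ E g x).
Proof.
  induction G as [|g G IH]; intros Hnd Hdisj; simpl.
  - symmetry; apply mass_none; intros x _ [g [[] _]].
  - inversion Hnd as [|g0 G0 HgG HndG]; subst.
    rewrite IH by (auto; intros; eapply Hdisj; eauto; right; auto).
    rewrite <- mass_or.
    + apply mass_ext; intros x _; split.
      * intros [K | [g' [K1 K2]]]; eauto.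
      * intros [g' [[<- | K1] K2]]; eauto.
    + intros x _ [K1 [g' [K2 K3]]].
      assert (g = g') as <- by (eapply Hdisj; eauto; [left | right]; auto).
      contradiction.
Qed.

Definition filterP Q L : list X := filter (fun x => if emi (Q x) then true else false) L.

Lemma In_filterP Q L x : In x (filterP Q L) <-> In x L /\ Q x.
Proof. unfold filterP; rewrite filter_In; destruct (emi (Q x)); intuition congruence. Qed.

Lemma sumR_filterP Q L p : sumR (map p (filterP Q L)) = mass L p Q.
Proof.
  unfold filterP, mass; induction L as [|x L IH]; simpl; [reflexivity|].
  destruct (emi (Q x)); simpl; rewrite IH; lra.
Qed.

Definition undup L : list X := nodup (fun x y => emi (x = y)) L.

Lemma NoDup_undup L : NoDup (undup L).
Proof. apply NoDup_nodup. Qed.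

Lemma In_undup L x : In x (undup L) <-> In x L.
Proof. apply nodup_In. Qed.

End WeightedSums.

Section Probabilities.

Variables (A Z : Type).
Notation comp := (list (step A Z)).
Implicit Types (P Q : comp -> Prop) (c : comp).

Lemma set_prob_unique P r1 r2 : set_prob P r1 -> set_prob P r2 -> r1 = r2.
Proof.
  intros [L1 [N1 [H1 <-]]] [L2 [N2 [H2 <-]]].
  apply sumR_perm, Permutation_map, NoDup_Permutation; auto.
  intro c; rewrite <- H1, <- H2; tauto.
Qed.

Lemma set_prob_ext P Q r : (forall c, P c <-> Q c) -> set_prob P r -> set_prob Q r.
Proof.
  intros H [L [N [HL S]]]; exists L; split; [|split]; auto.
  intro c; rewrite <- H; auto.
Qed.

Lemma set_prob_restrict P Q L :
  NoDup L -> (forall c, P c <-> In c L) ->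
  set_prob (fun c => P c /\ Q c) (mass L (@comp_prob A Z) Q).
Proof.
  intros N HL; exists (filterP Q L); split; [|split].
  - apply NoDup_filter; auto.
  - intro c; rewrite In_filterP, <- HL; tauto.
  - apply sumR_filterP.
Qed.

Lemma set_prob_nil P : (forall c, P c <-> c = []) -> set_prob P 1.
Proof.
  intros H; exists [[]]; split; [|split].
  - constructor; [intros [] | constructor].
  - intro c; rewrite H; simpl; intuition.
  - simpl; lra.
Qed.

Lemma set_prob_empty P : (forall c, ~ P c) -> set_prob P 0.
Proof.
  intros H; exists []; split; [constructor | split; [|reflexivity]].
  intro c; specialize (H c); simpl; tauto.
Qed.

Definition after_step (a : option A) (pi : Z -> R) (Q : Z -> comp -> Prop) c : Prop :=
  exists y c', 0 < pi y /\ c = (a, pi, y) :: c' /\ Q y c'.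

Lemma after_step_ext a pi (Q1 Q2 : Z -> comp -> Prop) c :
  (forall y c', 0 < pi y -> (Q1 y c' <-> Q2 y c')) ->
  (after_step a pi Q1 c <-> after_step a pi Q2 c).
Proof.
  intros H; split; intros [y [c' [Hy [-> Hq]]]];
    exists y, c'; repeat split; auto; apply H; auto.
Qed.

Lemma set_prob_cons_union a pi (ys : list Z) (Q : Z -> comp -> Prop) (f : Z -> R) :
  NoDup ys -> (forall y, In y ys -> set_prob (Q y) (f y)) ->
  set_prob (fun c => exists y c', In y ys /\ c = (a, pi, y) :: c' /\ Q y c')
    (sumR (map (fun y => pi y * f y) ys)).
Proof.
  induction ys as [|y ys IH]; intros Hnd HQ.
  - apply set_prob_empty; intros c [y [c' [[] _]]].
  - inversion Hnd as [|y0 ys0 Hy Hnd']; subst.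
    destruct (HQ y (or_introl eq_refl)) as [L1 [N1 [H1 S1]]].
    destruct (IH Hnd' (fun y' Hy' => HQ y' (or_intror Hy'))) as [L2 [N2 [H2 S2]]].
    exists (map (cons (a, pi, y)) L1 ++ L2); split; [|split].
    + apply NoDup_app; auto.
      * apply FinFun.Injective_map_NoDup; auto; intros u v E; injection E; auto.
      * intros c Hc Hc2; apply in_map_iff in Hc as [c1 [<- _]].
        apply H2 in Hc2 as [y' [c' [Hy' [E _]]]]; injection E; intros; subst; auto.
    + intro c; rewrite in_app_iff, in_map_iff, <- H2; split.
      * intros [y' [c' [[<- | Hy'] [-> Hq]]]].
        -- left; exists c'; split; [reflexivity | apply H1; exact Hq].
        -- right; exists y', c'; auto.
      * intros [[c1 [<- Hc1]] | [y' [c' [Hy' [-> Hq]]]]].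
        -- exists y, c1; repeat split; [left | apply H1]; auto.
        -- exists y', c'; repeat split; [right|]; auto.
    + rewrite map_app, sumR_app, map_map.
      change (sumR (map (fun c => pi y * comp_prob c) L1) + sumR (map (@comp_prob A Z) L2)
              = pi y * f y + sumR (map (fun y => pi y * f y) ys)).
      rewrite sumR_map_scal, S1, S2; reflexivity.
Qed.

Lemma dist_support (pi : Z -> R) : is_dist pi ->
  exists ys, NoDup ys /\ (forall y, In y ys <-> 0 < pi y) /\ sumR (map pi ys) = 1.
Proof.
  intros [l [N [Hs [Hn S]]]]; exists (filterP (fun y => 0 < pi y) l); split; [|split].
  - apply NoDup_filter; auto.
  - intro y; rewrite In_filterP; split; [tauto|].
    intros H; split; auto; apply Hs; lra.
  - rewrite sumR_filterP, <- S; apply sumR_map_ext; intros y _.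
    destruct (emi (0 < pi y)); auto; specialize (Hn y); lra.
Qed.

Lemma dist_support_nonempty (pi : Z -> R) : is_dist pi -> exists y, 0 < pi y.
Proof.
  intros Hd; destruct (dist_support Hd) as [[|y ys] [_ [Hys S]]].
  - simpl in S; lra.
  - exists y; apply Hys; left; reflexivity.
Qed.

Lemma set_prob_after_step a pi (ys : list Z) (Q : Z -> comp -> Prop) (f : Z -> R) :
  NoDup ys -> (forall y, In y ys <-> 0 < pi y) ->
  (forall y, 0 < pi y -> set_prob (Q y) (f y)) ->
  set_prob (after_step a pi Q) (sumR (map (fun y => pi y * f y) ys)).
Proof.
  intros N Hys HQ.
  eapply set_prob_ext;
    [|apply (set_prob_cons_union a pi); auto; intros y Hy; apply HQ, Hys, Hy].
  intro c; split; intros [y [c' [Hy H]]]; exists y, c'; (split; [apply Hys, Hy | exact H]).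
Qed.

Lemma after_step_prob_one a pi (Q : Z -> comp -> Prop) : is_dist pi ->
  (forall y, 0 < pi y -> set_prob (Q y) 1) -> set_prob (after_step a pi Q) 1.
Proof.
  intros Hd HQ; destruct (dist_support Hd) as [ys [N [Hys S]]].
  replace 1 with (sumR (map (fun y => pi y * 1) ys)).
  - apply set_prob_after_step; auto.
  - transitivity (sumR (map pi ys)); [apply sumR_map_ext; intros; ring | exact S].
Qed.

Lemma after_step_prob_eq a pi (Q1 Q2 : Z -> comp -> Prop) : is_dist pi ->
  (forall y, 0 < pi y -> exists r, set_prob (Q1 y) r /\ set_prob (Q2 y) r) ->
  exists r, set_prob (after_step a pi Q1) r /\ set_prob (after_step a pi Q2) r.
Proof.
  intros Hd HQ.
  assert (HQ' : forall y, exists r, 0 < pi y -> set_prob (Q1 y) r /\ set_prob (Q2 y) r).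
  { intro y; destruct (classic (0 < pi y)) as [Hy | Hy].
    - destruct (HQ y Hy) as [r Hr]; exists r; auto.
    - exists 0; tauto. }
  set (f := fun y => proj1_sig (constructive_indefinite_description _ (HQ' y))).
  assert (Hf : forall y, 0 < pi y -> set_prob (Q1 y) (f y) /\ set_prob (Q2 y) (f y)).
  { intros y; unfold f; destruct (constructive_indefinite_description _ (HQ' y)); auto. }
  destruct (dist_support Hd) as [ys [N [Hys _]]].
  exists (sumR (map (fun y => pi y * f y) ys));
    split; apply set_prob_after_step; auto; apply Hf.
Qed.

End Probabilities.

Section ResolutionComputations.

Variables (A Z : Type) (TZ : Z -> option A -> (Z -> R) -> Prop).
Notation comp := (list (step A Z)).
Implicit Types (V : comp -> Prop) (c : comp).

Definition deterministic : Prop :=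
  forall z a1 pi1 a2 pi2, TZ z a1 pi1 -> TZ z a2 pi2 -> a1 = a2 /\ pi1 = pi2.

(* Both maximal computations ([V] trivial) and the sets [Cw] are of this form. *)
Definition maximal_in (z : Z) V c : Prop :=
  is_comp TZ z c /\ V c /\ ~ (exists c', is_comp TZ z c' /\ V c' /\ proper_prefix c c').

Lemma max_comp_maximal_in z c : is_max_comp TZ z c <-> maximal_in z (fun _ => True) c.
Proof.
  unfold is_max_comp, maximal_in; split.
  - intros [H1 H2]; repeat split; auto; intros [c' [H3 [_ H4]]]; eauto.
  - intros [H1 [_ H2]]; split; auto; intros [c' [H3 H4]]; eauto.
Qed.

Lemma Cw_maximal_in z alpha c :
  Cw TZ z alpha c <-> maximal_in z (fun d => vis (comp_trace d) = alpha) c.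
Proof. reflexivity. Qed.

Lemma maximal_in_cons z V a pi y c' : TZ z a pi ->
  (maximal_in z V ((a, pi, y) :: c') <->
   0 < pi y /\ maximal_in y (fun d => V ((a, pi, y) :: d)) c').
Proof.
  intros Hz; unfold maximal_in; simpl; split.
  - intros [[_ [Hp Hc]] [HV Hn]]; repeat split; auto.
    intros [c'' [H1 [H2 [d [Hd ->]]]]]; apply Hn.
    exists ((a, pi, y) :: c' ++ d); repeat split; auto; exists d; auto.
  - intros [Hp [Hc [HV Hn]]]; repeat split; auto.
    intros [c2 [H1 [H2 [d [Hd ->]]]]]; simpl in H1; destruct H1 as [_ [_ H1]].
    apply Hn; exists (c' ++ d); repeat split; auto; exists d; auto.
Qed.

Lemma maximal_in_terminal z V c :
  (forall a pi, ~ TZ z a pi) -> (maximal_in z V c <-> c = [] /\ V []).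
Proof.
  intros Hn; unfold maximal_in; split.
  - intros [H1 [H2 _]]; destruct c as [|[[a pi] y] c']; [auto|].
    destruct H1 as [H1 _]; destruct (Hn a pi H1).
  - intros [-> HV]; repeat split; auto.
    intros [c' [H1 [_ [[|[[a pi] y] d] [Hd ->]]]]]; [auto|].
    destruct H1 as [H1 _]; exact (Hn a pi H1).
Qed.

Hypothesis Hdet : deterministic.

Lemma maximal_in_nil_step z a pi V : TZ z a pi ->
  (maximal_in z V [] <->
   V [] /\ forall y c', 0 < pi y -> is_comp TZ y c' -> ~ V ((a, pi, y) :: c')).
Proof.
  intros Hz; unfold maximal_in; split.
  - intros [_ [HV Hn]]; split; auto; intros y c' Hy Hc HV'; apply Hn.
    exists ((a, pi, y) :: c'); repeat split; auto.
    exists ((a, pi, y) :: c'); split; [discriminate | reflexivity].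
  - intros [HV Hn]; repeat split; auto.
    intros [[|[[a' pi'] y] c'] [Hc [HV' [d [Hd E]]]]]; [subst; auto|].
    destruct Hc as [Hz' [Hy Hc]]; destruct (Hdet Hz Hz') as [<- <-].
    exact (Hn y c' Hy Hc HV').
Qed.

Lemma maximal_in_step z a pi V c : TZ z a pi ->
  (maximal_in z V c <->
   (c = [] /\ maximal_in z V []) \/
   after_step a pi (fun y => maximal_in y (fun d => V ((a, pi, y) :: d))) c).
Proof.
  intros Hz; destruct c as [|[[a' pi'] y] c'].
  - split; [tauto|]; intros [[_ H] | [y [c' [_ [E _]]]]]; [auto | discriminate].
  - split.
    + intros Hc; destruct (proj1 Hc) as [Hz' _]; destruct (Hdet Hz Hz') as [<- <-].
      apply (maximal_in_cons V y c' Hz) in Hc as [Hy Hc]; right; exists y, c'; auto.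
    + intros [[E _] | [y' [c'' [Hy [E H]]]]]; [discriminate|].
      injection E as -> -> -> ->; apply (maximal_in_cons V y' c'' Hz); auto.
Qed.

Hypothesis Hpts : is_pts TZ.

Lemma max_comp_terminal z c : (forall a pi, ~ TZ z a pi) -> (is_max_comp TZ z c <-> c = []).
Proof. intros Hn; rewrite max_comp_maximal_in, maximal_in_terminal by auto; tauto. Qed.

Lemma max_comp_step z a pi c : TZ z a pi ->
  (is_max_comp TZ z c <-> after_step a pi (is_max_comp TZ) c).
Proof.
  intros Hz; rewrite max_comp_maximal_in, maximal_in_step by eauto.
  destruct (dist_support_nonempty (Hpts Hz)) as [y0 Hy0].
  rewrite (maximal_in_nil_step _ Hz); split.
  - intros [[_ [_ Hn]] | H]; [destruct (Hn y0 [] Hy0 I I)|].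
    revert H; apply after_step_ext; intros; rewrite max_comp_maximal_in; reflexivity.
  - intros H; right; revert H.
    apply after_step_ext; intros; rewrite max_comp_maximal_in; reflexivity.
Qed.

Lemma Cw_terminal z alpha c :
  (forall a pi, ~ TZ z a pi) -> (Cw TZ z alpha c <-> c = [] /\ alpha = []).
Proof.
  intros Hn; rewrite Cw_maximal_in.
  rewrite maximal_in_terminal by auto; simpl; intuition.
Qed.

Lemma Cw_tau z pi alpha c : TZ z None pi ->
  (Cw TZ z alpha c <-> after_step None pi (fun y => Cw TZ y alpha) c).
Proof.
  intros Hz; rewrite Cw_maximal_in.
  rewrite maximal_in_step, maximal_in_nil_step by eauto.
  destruct (dist_support_nonempty (Hpts Hz)) as [y0 Hy0]; split.
  - intros [[_ [HV Hn]] | H]; [destruct (Hn y0 [] Hy0 I HV) | exact H].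
  - intros H; right; exact H.
Qed.

Lemma Cw_visible_nil z b pi c : TZ z (Some b) pi -> (Cw TZ z [] c <-> c = []).
Proof.
  intros Hz; rewrite Cw_maximal_in.
  rewrite maximal_in_step, maximal_in_nil_step by eauto; split.
  - intros [[-> _] | [y [c' [_ [_ [_ [E _]]]]]]]; [reflexivity | discriminate].
  - intros ->; left; repeat split; intros y c' _ _ E; discriminate.
Qed.

Lemma Cw_visible_cons z b pi b' alpha c : TZ z (Some b) pi ->
  (Cw TZ z (b' :: alpha) c <-> b' = b /\ after_step (Some b) pi (fun y => Cw TZ y alpha) c).
Proof.
  intros Hz; rewrite Cw_maximal_in.
  rewrite maximal_in_step, maximal_in_nil_step by eauto; split.
  - intros [[_ [E _]] | [y [c' [Hy [-> [Hc [E Hn]]]]]]]; [discriminate|].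
    injection E as <- E; split; [reflexivity|].
    exists y, c'; repeat split; auto.
    intros [d [Hd [Ed Hp]]]; apply Hn; exists d; repeat split; simpl; congruence.
  - intros [-> [y [c' [Hy [-> [Hc [E Hn]]]]]]]; right.
    exists y, c'; repeat split; simpl; try congruence.
    intros [d [Hd [Ed Hp]]]; apply Hn; exists d; repeat split; auto.
    simpl in Ed; congruence.
Qed.

Lemma max_comp_prob_one z : Acc (succ TZ) z -> set_prob (is_max_comp TZ z) 1.
Proof.
  induction 1 as [z _ IH].
  destruct (classic (exists a pi, TZ z a pi)) as [[a [pi Hz]] | Hn].
  - eapply set_prob_ext; [intro c; symmetry; apply (max_comp_step c Hz)|].
    apply after_step_prob_one; [exact (Hpts Hz)|].
    intros y Hy; apply IH; exists a, pi; auto.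
  - apply set_prob_nil; intro c; apply max_comp_terminal.
    intros a pi Hz; apply Hn; eauto.
Qed.

Definition max_prefix_comp (z : Z) (alpha : list A) c : Prop :=
  is_max_comp TZ z c /\ prefix alpha (vis (comp_trace c)).

Lemma max_prefix_comp_step z a pi alpha c : TZ z a pi ->
  (max_prefix_comp z alpha c <->
   after_step a pi (fun y c' => is_max_comp TZ y c' /\ prefix alpha (vis (a :: comp_trace c'))) c).
Proof.
  intros Hz; unfold max_prefix_comp; rewrite (max_comp_step c Hz); split.
  - intros [[y [c' [Hy [-> Hc]]]] Hp]; exists y, c'; auto.
  - intros [y [c' [Hy [-> [Hc Hp]]]]]; split; [exists y, c'|]; auto.
Qed.

Definition Cw_prefix_equiprobable (z : Z) : Prop := forall alpha,
  exists r, set_prob (Cw TZ z alpha) r /\ set_prob (max_prefix_comp z alpha) r.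

Lemma Cw_prefix_equiprobable_terminal z :
  (forall a pi, ~ TZ z a pi) -> Cw_prefix_equiprobable z.
Proof.
  intros Hn alpha.
  assert (Hsame : forall c, Cw TZ z alpha c <-> max_prefix_comp z alpha c).
  { intro c; unfold max_prefix_comp; rewrite Cw_terminal, max_comp_terminal by exact Hn.
    split.
    - intros [-> ->]; split; [reflexivity | exists []; reflexivity].
    - intros [-> [d E]]; destruct alpha; [auto | discriminate]. }
  assert (HCw : exists r, set_prob (Cw TZ z alpha) r).
  { destruct alpha as [|b alpha]; [exists 1 | exists 0].
    - apply set_prob_nil; intro c; rewrite Cw_terminal by exact Hn; tauto.
    - apply set_prob_empty; intro c; rewrite Cw_terminal by exact Hn.
      intros [_ E]; discriminate. }
  destruct HCw as [r Hr]; exists r; split; [exact Hr | exact (set_prob_ext _ Hsame Hr)].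
Qed.

Lemma Cw_prefix_equiprobable_step z a pi : TZ z a pi ->
  set_prob (is_max_comp TZ z) 1 ->
  (forall y, 0 < pi y -> Cw_prefix_equiprobable y) -> Cw_prefix_equiprobable z.
Proof.
  intros Hz Hone IH alpha; destruct a as [b|].
  - destruct alpha as [|b' alpha].
    + exists 1; split.
      * apply set_prob_nil; intro c; apply (Cw_visible_nil c Hz).
      * eapply set_prob_ext; [|exact Hone].
        intro c; split; [|intros [H _]; exact H].
        intros H; split; [exact H | exists (vis (comp_trace c)); reflexivity].
    + destruct (classic (b' = b)) as [-> | Hne].
      * destruct (after_step_prob_eq (Some b) _ _ (Hpts Hz) (fun y Hy => IH y Hy alpha))
          as [r [H1 H2]].
        exists r; split.
        -- eapply set_prob_ext; [|exact H1]; intro c.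
           rewrite (Cw_visible_cons b alpha c Hz); tauto.
        -- eapply set_prob_ext; [|exact H2]; intro c.
           rewrite (max_prefix_comp_step _ c Hz); apply after_step_ext; intros y c' _.
           unfold max_prefix_comp; simpl; split; intros [Hc [d E]]; split; auto; exists d.
           ++ rewrite E; reflexivity.
           ++ injection E; auto.
      * exists 0; split; apply set_prob_empty; intro c.
        -- rewrite (Cw_visible_cons b' alpha c Hz); intros [E _]; contradiction.
        -- rewrite (max_prefix_comp_step _ c Hz); intros [y [c' [_ [_ [_ [d E]]]]]].
           simpl in E; injection E; intros; congruence.
  - destruct (after_step_prob_eq None _ _ (Hpts Hz) (fun y Hy => IH y Hy alpha))
      as [r [H1 H2]].
    exists r; split.
    + eapply set_prob_ext; [|exact H1]; intro c; rewrite (Cw_tau alpha c Hz); reflexivity.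
    + eapply set_prob_ext; [|exact H2]; intro c.
      rewrite (max_prefix_comp_step _ c Hz); reflexivity.
Qed.

Lemma Cw_prefix_equiprobable_acc z : Acc (succ TZ) z -> Cw_prefix_equiprobable z.
Proof.
  intros Hacc; induction Hacc as [z Hacc IH].
  destruct (classic (exists a pi, TZ z a pi)) as [[a [pi Hz]] | Hn].
  - apply (Cw_prefix_equiprobable_step Hz (max_comp_prob_one (Acc_intro z Hacc))).
    intros y Hy; apply IH; exists a, pi; auto.
  - apply Cw_prefix_equiprobable_terminal; intros a pi Hz; apply Hn; eauto.
Qed.

End ResolutionComputations.

Lemma Acc_resolution (A S Z : Type) (T : S -> option A -> (S -> R) -> Prop)
    (TZ : Z -> option A -> (Z -> R) -> Prop) (corr : Z -> S) :
  (forall z a pi, TZ z a pi -> exists pi', T (corr z) a pi' /\ forall z', pi z' = pi' (corr z')) ->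
  forall z, Acc (succ T) (corr z) -> Acc (succ TZ) z.
Proof.
  intros Hcorr z Hacc; remember (corr z) as x eqn:Ex; revert z Ex.
  induction Hacc as [x _ IH]; intros z ->; constructor; intros y [a [pi [Hz Hy]]].
  destruct (Hcorr _ _ _ Hz) as [pi' [Hx Hpi]].
  apply (IH (corr y)); [exists a, pi'; rewrite <- Hpi; auto | reflexivity].
Qed.

Lemma comp_prob_pos (A Z : Type) (TZ : Z -> option A -> (Z -> R) -> Prop) z c :
  is_comp TZ z c -> 0 < comp_prob c.
Proof.
  revert z; induction c as [|[[a pi] y] c IH]; simpl; intros z H; [lra|].
  destruct H as [_ [Hy Hc]]; apply Rmult_lt_0_compat; eauto.
Qed.

Definition trace_mass (A Z : Type) (L : list (list (step A Z))) (Q : list A -> Prop) : R :=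
  mass L (@comp_prob A Z) (fun c => Q (vis (comp_trace c))).

Lemma resolution_max_comps (A S Z : Type) (T : S -> option A -> (S -> R) -> Prop) (s : S)
    (TZ : Z -> option A -> (Z -> R) -> Prop) (corr : Z -> S) (z : Z) :
  is_resolution T s TZ corr z -> finite_proc T s ->
  exists L, NoDup L /\ (forall c, is_max_comp TZ z c <-> In c L) /\
    sumR (map (@comp_prob A Z) L) = 1 /\
    forall alpha, set_prob (Cw TZ z alpha) (trace_mass L (prefix alpha)).
Proof.
  intros [Hpts [Hz [_ [_ [Hcorr Hdet]]]]] Hfin.
  assert (Hacc : Acc (succ TZ) z)
    by (eapply Acc_resolution; [exact Hcorr | rewrite Hz; exact Hfin]).
  destruct (max_comp_prob_one Hdet Hpts Hacc) as [L [N [HL S1]]].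
  exists L; split; [|split; [|split]]; auto.
  intro alpha; destruct (Cw_prefix_equiprobable_acc Hdet Hpts Hacc alpha) as [r [H1 H2]].
  replace (trace_mass L (prefix alpha)) with r; [exact H1|].
  apply (set_prob_unique H2), set_prob_restrict; auto.
Qed.

(* Inclusion-exclusion over the one-letter extensions of [w]. *)
Lemma mass_eq_prefix_mass (X A : Type) (L : list X) p (k : X -> list A) (As : list A) w :
  NoDup As -> (forall x a, In x L -> In a (k x) -> In a As) ->
  mass L p (fun x => k x = w) = mass L p (fun x => prefix w (k x)) -
    sumR (map (fun a => mass L p (fun x => prefix (w ++ [a]) (k x))) As).
Proof.
  intros N HA; rewrite mass_bigcup; auto.
  2:{ intros a1 a2 x _ _ [d1 E1] [d2 E2]; rewrite E1, <- !app_assoc in E2.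
      apply app_inv_head in E2; injection E2; auto. }
  rewrite (mass_ext L p (fun x => prefix w (k x))
             (fun x => k x = w \/ exists a, In a As /\ prefix (w ++ [a]) (k x))).
  - rewrite mass_or; [lra|].
    intros x _ [E [a [_ [d E2]]]]; rewrite E in E2; apply (f_equal (@length A)) in E2.
    rewrite !length_app in E2; simpl in E2; lia.
  - intros x Hx; split.
    + intros [[|a d] E].
      * left; rewrite E, app_nil_r; reflexivity.
      * right; exists a; split.
        -- apply (HA x a Hx); rewrite E; apply in_or_app; right; left; reflexivity.
        -- exists d; rewrite E, <- app_assoc; reflexivity.
    + intros [E | [a [_ [d E]]]].
      * exists []; rewrite E, app_nil_r; reflexivity.
      * exists (a :: d); rewrite E, <- app_assoc; reflexivity.
Qed.

Section TraceDistributions.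

Variables (X1 X2 K : Type) (L1 : list X1) (L2 : list X2) (p1 : X1 -> R) (p2 : X2 -> R).

Lemma mass_preimage_eq (k1 : X1 -> K) (k2 : X2 -> K) :
  (forall w, mass L1 p1 (fun x => k1 x = w) = mass L2 p2 (fun x => k2 x = w)) ->
  forall Q : K -> Prop, mass L1 p1 (fun x => Q (k1 x)) = mass L2 p2 (fun x => Q (k2 x)).
Proof.
  intros H Q; set (Ks := undup (map k1 L1 ++ map k2 L2)).
  assert (Hfib : forall (X : Type) (L : list X) p (k : X -> K),
            (forall x, In x L -> In (k x) Ks) ->
            mass L p (fun x => Q (k x))
            = sumR (map (fun w => mass L p (fun x => k x = w /\ Q w)) Ks)).
  { intros X L p k Hk.
    rewrite mass_bigcup; [| apply NoDup_undup | intros g1 g2 x _ _ [<- _] [<- _]; auto].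
    apply mass_ext; intros x Hx; split.
    - intros Hq; exists (k x); auto.
    - intros [w [_ [-> Hq]]]; exact Hq. }
  rewrite (Hfib _ L1 p1 k1), (Hfib _ L2 p2 k2).
  - apply sumR_map_ext; intros w _; destruct (classic (Q w)) as [Hq | Hq].
    + transitivity (mass L1 p1 (fun x => k1 x = w)); [apply mass_ext; intros; tauto|].
      rewrite H; apply mass_ext; intros; tauto.
    + rewrite !mass_none; auto; intros x _ [_ Hq']; auto.
  - intros x Hx; apply In_undup, in_or_app; right; apply in_map; auto.
  - intros x Hx; apply In_undup, in_or_app; left; apply in_map; auto.
Qed.

Lemma mass_eq_of_prefix_mass (A : Type) (k1 : X1 -> list A) (k2 : X2 -> list A) :
  (forall alpha, mass L1 p1 (fun x => prefix alpha (k1 x))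
                 = mass L2 p2 (fun x => prefix alpha (k2 x))) ->
  forall w, mass L1 p1 (fun x => k1 x = w) = mass L2 p2 (fun x => k2 x = w).
Proof.
  intros H w; set (As := undup (flat_map k1 L1 ++ flat_map k2 L2)).
  rewrite (@mass_eq_prefix_mass _ _ L1 p1 k1 As w), (@mass_eq_prefix_mass _ _ L2 p2 k2 As w);
    try apply NoDup_undup.
  - rewrite H; f_equal; apply sumR_map_ext; auto.
  - intros x a Hx Ha; apply In_undup, in_or_app; right; apply in_flat_map; eauto.
  - intros x a Hx Ha; apply In_undup, in_or_app; left; apply in_flat_map; eauto.
Qed.

End TraceDistributions.

Fixpoint tform_of_trace (A : Type) (e : list (option A)) : tform A :=
  match e with [] => TTop | a :: e' => TDia a (tform_of_trace e') end.

Lemma ftrace_tform_of_trace (A : Type) (e : list (option A)) : ftrace (tform_of_trace e) = e.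
Proof. induction e; simpl; congruence. Qed.

Lemma ftrace_inj (A : Type) (f g : tform A) : ftrace f = ftrace g -> f = g.
Proof.
  revert g; induction f; destruct g; simpl; intros H; try discriminate; auto.
  injection H; intros; f_equal; auto.
Qed.

Lemma csat_depth_iff (A X : Type) (c : list (step A X)) (f : tform A) :
  (csat c f /\ length c = depth f) <-> comp_trace c = ftrace f.
Proof.
  unfold comp_trace; revert c; induction f as [|a f IH]; intros [|[[a' pi] y] c]; simpl.
  - tauto.
  - split; [intros [_ H]; discriminate | discriminate].
  - split; [intros [[] _] | discriminate].
  - split.
    + intros [[-> Hc] E]; injection E as E; f_equal; apply IH; auto.
    + intros E; injection E as -> E; apply IH in E as [Hc E]; auto.
Qed.

Lemma vis_map_Some (A : Type) (w : list A) : vis (map Some w) = w.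
Proof. induction w; simpl; congruence. Qed.

Definition csum (A : Type) (f : tform A) (psi : tdform A) : R :=
  sumR (map (fun gr => if emi (tform_equiv (fst gr) f) then snd gr else 0) psi).

Lemma class_mass_iff (A : Type) (f : tform A) psi m : class_mass f psi m <-> m = csum f psi.
Proof.
  revert m; induction psi as [|[g r] psi IH]; intros m; split.
  - intros H; inversion H; reflexivity.
  - intros ->; constructor.
  - intros H; inversion H as [| ? ? ? ? m' He Hm | ? ? ? ? m' He Hm]; subst;
      unfold csum; simpl; apply IH in Hm; subst;
      destruct (emi (tform_equiv g f)); try contradiction; unfold csum; lra.
  - intros ->; unfold csum; simpl; destruct (emi (tform_equiv g f)).
    + apply cm_in; auto; apply IH; reflexivity.
    + rewrite Rplus_0_l; apply cm_out; auto; apply IH; reflexivity.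
Qed.

Lemma tdf_equiv_of_csum (A : Type) (psi1 psi2 : tdform A) :
  (forall f, csum f psi1 = csum f psi2) -> tdf_equiv psi1 psi2.
Proof. intros H f m; rewrite !class_mass_iff, H; tauto. Qed.

Section ResolutionFormulas.

Variables (A Z : Type) (TZ : Z -> option A -> (Z -> R) -> Prop) (z : Z)
  (L : list (list (step A Z))).
Hypotheses (HN : NoDup L) (HL : forall c, is_max_comp TZ z c <-> In c L)
  (Hone : sumR (map (@comp_prob A Z) L) = 1).

Definition res_sat (psi : tdform A) : Prop :=
  forall f r, In (f, r) psi ->
    set_prob (fun c => is_max_comp TZ z c /\ csat c f /\ length c = depth f) r.

Lemma max_comp_prob_pos c : In c L -> 0 < comp_prob c.
Proof. intros Hc; apply HL in Hc as [Hc _]; exact (comp_prob_pos _ _ _ Hc). Qed.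

Lemma res_sat_weight psi g r : res_sat psi -> In (g, r) psi ->
  r = mass L (@comp_prob A Z) (fun c => comp_trace c = ftrace g).
Proof.
  intros Hsat Hin; apply (set_prob_unique (Hsat g r Hin)).
  eapply set_prob_ext; [|exact (set_prob_restrict _ (fun c => comp_trace c = ftrace g) HN HL)].
  intro c; cbv beta; rewrite csat_depth_iff; tauto.
Qed.

(* The weights of a satisfied formula are the probabilities of the full traces
   [ftrace g]; these partition the maximal computations, so the class masses are
   the visible-trace masses. *)
Lemma csum_res_sat psi : is_tdform psi -> res_sat psi ->
  forall f, csum f psi = trace_mass L (fun v => v = vis (ftrace f)).
Proof.
  intros [_ [Nd [_ Ssum]]] Hsat.
  assert (Hsumgen : forall Q : tform A -> Prop,
     sumR (map (fun gr => if emi (Q (fst gr)) then snd gr else 0) psi)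
     = mass L (@comp_prob A Z)
         (fun c => exists g, In g (map fst psi) /\ (comp_trace c = ftrace g /\ Q g))).
  { intros Q; rewrite <- mass_bigcup; [| exact Nd |].
    - rewrite map_map; apply sumR_map_ext; intros [g r] Hin; simpl.
      rewrite (res_sat_weight g r Hsat Hin); destruct (emi (Q g)).
      + apply mass_ext; intros; tauto.
      + symmetry; apply mass_none; tauto.
    - intros g1 g2 x _ _ [E1 _] [E2 _]; apply ftrace_inj; congruence. }
  assert (Hcov : forall c, In c L -> exists g, In g (map fst psi) /\ comp_trace c = ftrace g).
  { intros c Hc.
    assert (Hall : mass L (@comp_prob A Z)
              (fun c => exists g, In g (map fst psi) /\ (comp_trace c = ftrace g /\ True))
            = sumR (map (@comp_prob A Z) L)).
    { rewrite <- Hsumgen, Hone, <- Ssum; apply sumR_map_ext.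
      intros; destruct (emi True); tauto. }
    destruct (mass_eq_sum_all _ _ _ max_comp_prob_pos Hall c Hc) as [g [Hg [Eg _]]].
    exists g; auto. }
  intros f; unfold csum, trace_mass; rewrite (Hsumgen (fun g => tform_equiv g f)).
  apply mass_ext; intros c Hc; split.
  - intros [g [_ [E He]]]; rewrite E; exact He.
  - intros E; destruct (Hcov c Hc) as [g [Hg Eg]].
    exists g; repeat split; auto; unfold tform_equiv; rewrite <- Eg; auto.
Qed.

(* The formula listing the distribution of full traces of the maximal computations. *)
Lemma res_sat_trace_formula : exists psi, is_tdform psi /\ res_sat psi.
Proof.
  set (E := undup (map (@comp_trace A Z) L)).
  assert (HE : forall e, In e E <-> In e (map (@comp_trace A Z) L)) by apply In_undup.
  assert (Hge : forall c, In c L -> 0 <= comp_prob c)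
    by (intros; apply Rlt_le, max_comp_prob_pos; auto).
  exists (map (fun e => (tform_of_trace e, mass L (@comp_prob A Z) (fun c => comp_trace c = e)))
              E).
  split; [split; [|split; [|split]]|].
  - destruct L as [|c0 L0]; [simpl in Hone; lra|]; intros Hnil; apply map_eq_nil in Hnil.
    assert (Hi : In (comp_trace c0) E) by (apply HE; left; reflexivity).
    rewrite Hnil in Hi; destruct Hi.
  - rewrite map_map; simpl; apply FinFun.Injective_map_NoDup; [|apply NoDup_undup].
    intros e1 e2 He; rewrite <- (ftrace_tform_of_trace e1), He; apply ftrace_tform_of_trace.
  - intros f r Hin; apply in_map_iff in Hin as [e [Ee He]]; injection Ee as <- <-.
    apply HE, in_map_iff in He as [c [Ec Hc]]; split.
    + apply mass_pos with c; auto; apply max_comp_prob_pos; auto.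
    + rewrite <- Hone; apply mass_le_sum; auto.
  - rewrite map_map; simpl.
    rewrite (mass_bigcup (G := E) L (@comp_prob A Z) (fun e c => comp_trace c = e));
      [| apply NoDup_undup | intros; congruence].
    rewrite mass_all; auto; intros c Hc; exists (comp_trace c); split; auto.
    apply HE, in_map; auto.
  - intros f r Hin; apply in_map_iff in Hin as [e [Ee He]]; injection Ee as <- <-.
    eapply set_prob_ext; [|exact (set_prob_restrict _ (fun c => comp_trace c = e) HN HL)].
    intro c; cbv beta; rewrite csat_depth_iff, ftrace_tform_of_trace; tauto.
Qed.

End ResolutionFormulas.

Section Halves.

Variables (A S : Type) (T : S -> option A -> (S -> R) -> Prop) (s t : S).
Hypotheses (Hs : finite_proc T s) (Ht : finite_proc T t).

Lemma Lw_half_of_wpte_half : wpte_half T s t -> Lw_half T s t.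
Proof.
  intros H psi Hpsi [Z1 [T1 [c1 [z1 [R1 Hs1]]]]].
  destruct (H Z1 T1 c1 z1 R1) as [Z2 [T2 [c2 [z2 [R2 HW]]]]].
  destruct (resolution_max_comps R1 Hs) as [L1 [N1 [HL1 [S1 W1]]]].
  destruct (resolution_max_comps R2 Ht) as [L2 [N2 [HL2 [S2 W2]]]].
  assert (Hexact : forall w, trace_mass L1 (fun v => v = w) = trace_mass L2 (fun v => v = w)).
  { apply mass_eq_of_prefix_mass; intro alpha; destruct (HW alpha) as [r [Hr1 Hr2]].
    exact (eq_trans (set_prob_unique (W1 alpha) Hr1) (eq_sym (set_prob_unique (W2 alpha) Hr2))). }
  destruct (res_sat_trace_formula N2 HL2 S2) as [psi' [Hpsi' Hs2]].
  exists psi'; split; [exact Hpsi' | split].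
  - exists Z2, T2, c2, z2; split; [exact R2 | exact Hs2].
  - apply tdf_equiv_of_csum; intro f.
    rewrite (csum_res_sat N1 HL1 S1 Hpsi Hs1), (csum_res_sat N2 HL2 S2 Hpsi' Hs2).
    apply Hexact.
Qed.

Lemma wpte_half_of_Lw_half : Lw_half T s t -> wpte_half T s t.
Proof.
  intros H Z1 T1 c1 z1 R1.
  destruct (resolution_max_comps R1 Hs) as [L1 [N1 [HL1 [S1 W1]]]].
  destruct (res_sat_trace_formula N1 HL1 S1) as [psi [Hpsi Hs1]].
  destruct (H psi Hpsi) as [psi' [Hpsi' [[Z2 [T2 [c2 [z2 [R2 Hs2]]]]] Heq]]].
  { exists Z1, T1, c1, z1; split; [exact R1 | exact Hs1]. }
  destruct (resolution_max_comps R2 Ht) as [L2 [N2 [HL2 [S2 W2]]]].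
  assert (Hexact : forall w, trace_mass L1 (fun v => v = w) = trace_mass L2 (fun v => v = w)).
  { intro w; set (f := tform_of_trace (map Some w)).
    pose proof (csum_res_sat N1 HL1 S1 Hpsi Hs1 f) as E1.
    pose proof (csum_res_sat N2 HL2 S2 Hpsi' Hs2 f) as E2.
    unfold f in E1, E2; rewrite ftrace_tform_of_trace, vis_map_Some in E1, E2.
    rewrite <- E1, <- E2; apply class_mass_iff, Heq, class_mass_iff; reflexivity. }
  exists Z2, T2, c2, z2; split; [exact R2|]; intro alpha.
  exists (trace_mass L1 (prefix alpha)); split; [apply W1|].
  unfold trace_mass; rewrite (mass_preimage_eq L1 L2 _ _ (fun c => vis (comp_trace c))
                               (fun c => vis (comp_trace c)) Hexact (prefix alpha)).
  apply W2.
Qed.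

End Halves.

Theorem theorem13 (A S : Type) (T : S -> option A -> (S -> R) -> Prop)
  (HT : is_pts T) (s t : S)
  (Hs_if : image_finite T s) (Hs_fin : finite_proc T s)
  (Ht_if : image_finite T t) (Ht_fin : finite_proc T t) :
  weak_prob_trace_equiv T s t <-> Lw_equiv T s t.
Proof.
  split; intros [H1 H2]; split.
  - exact (Lw_half_of_wpte_half Hs_fin Ht_fin H1).
  - exact (Lw_half_of_wpte_half Ht_fin Hs_fin H2).
  - exact (wpte_half_of_Lw_half Hs_fin Ht_fin H1).
  - exact (wpte_half_of_Lw_half Ht_fin Hs_fin H2).
Qed.
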